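(* Let $f:[0,\infty)\to\mathbb{R}$ be differentiable, let $0<a<b<\infty$, and suppose $f'$ is Lebesgue integrable on $[a,b]$. Let $(\alpha,m)\in(0,1]^2$ and suppose $|f'|$ is $(\alpha,m)$-GA-convex on $[0,\max\{a^{1/m},b\}]$. Then \[ \biggl|\frac{b^2f(b)-a^2f(a)}{2}-\int_a^b xf(x)\,dx\biggr|\le\frac{\ln b-\ln a}{2}\Bigl\{m\bigl[L(a^3,b^3)-G(\alpha,3)\bigr]\bigl|f'(a^{1/m})\bigr|+G(\alpha,3)|f'(b)|\Bigr\}. \]
   Context: For $c>0$, $h:[0,c]\to\mathbb{R}$ and $(\alpha,m)\in(0,1]^2$, $h$ is called $(\alpha,m)$-GA-convex on $[0,c]$ if $h\bigl(x^\lambda y^{m(1-\lambda)}\bigr)\le\lambda^\alpha h(x)+m(1-\lambda^\alpha)h(y)$ for all $x,y\in[0,c]$ and all $\lambda\in[0,1]$ (with the convention $0^0=1$). For fixed $0<a<b$ and $\ell\ge0$, $\alpha>0$, set $G(\alpha,\ell)=\int_0^1 t^\alpha a^{\ell(1-t)}b^{\ell t}\,dt$. For $x,y>0$, $x\neq y$, the logarithmic mean is $L(x,y)=\frac{y-x}{\ln y-\ln x}$. *)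

From Stdlib Require Import Reals Lra.
Open Scope R_scope.

(* Real power on [0,oo) with the convention 0^0 = 1 and 0^y = 0 for y <> 0
   (only used with y >= 0). For x > 0 this is Rpower x y = exp (y ln x). *)
Definition rpow (x y : R) : R :=
  if Req_EM_T x 0 then (if Req_EM_T y 0 then 1 else 0) else Rpower x y.

Definition GA_convex (alpha m c : R) (h : R -> R) : Prop :=
  forall x y lam : R,
    0 <= x <= c -> 0 <= y <= c -> 0 <= lam <= 1 ->
    0 <= rpow x lam * rpow y (m * (1 - lam)) <= c ->
    h (rpow x lam * rpow y (m * (1 - lam)))
      <= rpow lam alpha * h x + m * (1 - rpow lam alpha) * h y.

(* Integrand of G(alpha, l) = int_0^1 t^alpha a^(l(1-t)) b^(l t) dt. *)
Definition G_integrand (a b alpha l : R) (t : R) : R :=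
  rpow t alpha * Rpower a (l * (1 - t)) * Rpower b (l * t).

Definition logmean (x y : R) : R := (y - x) / (ln y - ln x).

Definition right_deriv (f : R -> R) (x l : R) : Prop :=
  forall eps : R, 0 < eps -> exists delta : R, 0 < delta /\
    forall h : R, 0 < h < delta -> Rabs ((f (x + h) - f x) / h - l) < eps.

From Stdlib Require Import Reals Lra Lia.
From Coquelicot Require Import Coquelicot.
Open Scope R_scope.

(* Substitute x = X(t) = a^(1-t) b^t, the "geometric path" from a
   to b, for which dx = (ln b - ln a) X(t) dt.  With the primitive
   F(x) = x^2/2 f(x) - int_a^x s f(s) ds, whose derivative is x^2/2 f'(x), the
   left-hand side is |F(X 1) - F(X 0)| and d/dt F(X t) = (ln b - ln a)/2 X(t)^3 f'(X t).
   Since f' need not be integrable along the path, we bound the increment by a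
   mean value argument instead of the fundamental theorem of calculus
   (abs_increment_le_RInt), giving moment_deviation_le: the left-hand side is at
   most (ln b - ln a)/2 int_0^1 X(t)^3 w(t) dt for any continuous majorant w of
   |f'(X t)|.  GA-convexity applied to x = b, y = a^(1/m), lambda = t provides the
   majorant w = t^alpha |f'(b)| + m (1 - t^alpha) |f'(a^(1/m))| (GA_weight), whose
   weighted integral is computed from int_0^1 X^3 = L(a^3, b^3) and
   int_0^1 t^alpha X^3 = G(alpha, 3). *)

Lemma rpow_pos (x y : R) : 0 < x -> rpow x y = exp (y * ln x).
Proof. intro Hx; unfold rpow; destruct (Req_EM_T x 0); [lra | reflexivity]. Qed.

Lemma rpow_0_l (y : R) : y <> 0 -> rpow 0 y = 0.
Proof.
  intro Hy; unfold rpow; destruct (Req_EM_T 0 0) as [_ | ]; [| lra].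
  destruct (Req_EM_T y 0); [lra | reflexivity].
Qed.

(* t |-> max(t,0)^alpha is continuous on all of R when alpha > 0; it agrees with
   t^alpha on [0,1] and lets us integrate and differentiate without domain side
   conditions. *)
Lemma continuous_rpow_pos_part (alpha : R) :
  0 < alpha -> forall t : R, continuity_pt (fun s => rpow (Rmax 0 s) alpha) t.
Proof.
  intros Halpha t.
  destruct (Rtotal_order t 0) as [Hneg | [-> | Hpos]].
  - apply continuity_pt_locally_ext with (a := - t) (f := fun _ => 0); [lra | |].
    + intros y Hy; unfold Rdist in Hy; apply Rabs_def2 in Hy.
      rewrite Rmax_left by lra; rewrite rpow_0_l; lra.
    + apply continuity_pt_const; intros u v; reflexivity.
  - intros eps Heps.
    exists (exp (ln eps / alpha)); split; [apply exp_pos |].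
    intros x [_ Hx]; simpl in *; unfold R_dist, Rdist in *.
    rewrite (Rmax_left 0 0), rpow_0_l, Rminus_0_r by lra; rewrite Rminus_0_r in Hx.
    destruct (Rle_dec x 0) as [Hx0 | Hx0].
    + rewrite Rmax_left, rpow_0_l, Rabs_R0 by lra; exact Heps.
    + rewrite Rmax_right, rpow_pos, Rabs_right by (try left; try apply exp_pos; lra).
      rewrite Rabs_right in Hx by lra.
      assert (Hln : ln x < ln eps / alpha).
      { rewrite <- (ln_exp (ln eps / alpha)); apply ln_increasing; lra. }
      rewrite <- (exp_ln eps) by exact Heps.
      apply exp_increasing.
      replace (ln eps) with (alpha * (ln eps / alpha)) by (field; lra).
      apply Rmult_lt_compat_l; lra.
  - apply continuity_pt_locally_ext with (a := t) (f := fun s => exp (alpha * ln s)); [lra | |].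
    + intros y Hy; unfold Rdist in Hy; apply Rabs_def2 in Hy.
      rewrite Rmax_right by lra; rewrite rpow_pos; [reflexivity | lra].
    + apply derivable_continuous_pt.
      apply (derivable_pt_comp (fun s => alpha * ln s) exp); [| apply derivable_pt_exp].
      apply derivable_pt_mult; [apply derivable_pt_const |].
      exists (/ t); apply derivable_pt_lim_ln; exact Hpos.
Qed.

(* If |H'| <= B on [c, d] with B continuous, then |H d - H c| <= int_c^d B.
   No integrability of H' is required: we apply the mean value theorem to
   +-H - K, where K is a primitive of B. *)
Lemma abs_increment_le_RInt (H dH B : R -> R) (c d : R) :
  c <= d ->
  (forall t, c <= t <= d -> is_derive H t (dH t)) ->
  (forall t, c <= t <= d -> Rabs (dH t) <= B t) ->
  (forall t, continuity_pt B t) ->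
  Rabs (H d - H c) <= RInt B c d.
Proof.
  intros Hcd derH bound contB.
  set (K := fun t => RInt B c t).
  assert (derK : forall t, is_derive K t (B t)).
  { intro t; apply (is_derive_RInt B K c t).
    - apply filter_forall; intro y; apply (RInt_correct (V := R_CompleteNormedModule)).
      apply ex_RInt_continuous; intros z _; apply continuity_pt_filterlim, contB.
    - apply continuity_pt_filterlim, contB. }
  (* For s = 1 and s = -1 the function s H - K is nonincreasing on [c, d]. *)
  assert (signed : forall s, s = 1 \/ s = -1 -> s * (H d - H c) <= K d - K c).
  { intros s Hs.
    assert (derD : forall t, c <= t <= d ->
                   is_derive (fun t => s * H t - K t) t (s * dH t - B t)).
    { intros t Ht; apply (is_derive_minus (fun t => s * H t) K);
        [apply is_derive_scal, derH, Ht | apply derK]. }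
    destruct (MVT_gen (fun t => s * H t - K t) c d (fun t => s * dH t - B t))
      as [t [Ht Hmvt]]; rewrite ?Rmin_left, ?Rmax_right in * by exact Hcd.
    - intros t Ht; apply derD; lra.
    - intros t Ht; apply continuity_pt_filterlim.
      apply (ex_derive_continuous (K := R_AbsRing) (V := R_NormedModule)
               (fun t => s * H t - K t)).
      eexists; apply derD, Ht.
    - pose proof (proj1 (Rabs_le_between _ _) (bound t Ht)).
      destruct Hs as [-> | ->]; nra. }
  assert (K0 : K c = 0) by (unfold K; rewrite RInt_point; reflexivity).
  fold (K d); rewrite K0, Rminus_0_r in signed.
  apply Rabs_le_between; split.
  - pose proof (signed (-1) (or_intror eq_refl)); lra.
  - pose proof (signed 1 (or_introl eq_refl)); lra.
Qed.

Definition geo_path (a b t : R) : R := exp (ln a + t * (ln b - ln a)).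

Section GeometricPath.
Variables a b : R.
Hypotheses (Ha : 0 < a) (Hb : 0 < b).

Lemma geo_path_pos (t : R) : 0 < geo_path a b t.
Proof. apply exp_pos. Qed.

Lemma geo_path_0 : geo_path a b 0 = a.
Proof. unfold geo_path; rewrite Rmult_0_l, Rplus_0_r; apply exp_ln, Ha. Qed.

Lemma geo_path_1 : geo_path a b 1 = b.
Proof.
  unfold geo_path; replace (ln a + 1 * (ln b - ln a)) with (ln b) by ring.
  apply exp_ln, Hb.
Qed.

Lemma is_derive_geo_path (t : R) :
  is_derive (geo_path a b) t ((ln b - ln a) * geo_path a b t).
Proof. unfold geo_path; auto_derive; [exact I | ring]. Qed.

Lemma continuous_geo_path_pow (n : nat) (t : R) :
  continuity_pt (fun s => geo_path a b s ^ n) t.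
Proof.
  apply continuity_pt_filterlim.
  apply (ex_derive_continuous (K := R_AbsRing) (V := R_NormedModule)
           (fun s => geo_path a b s ^ n)).
  unfold geo_path; auto_derive; exact I.
Qed.

(* For a <= b the path stays below b, so it lies in the GA-convexity domain. *)
Lemma geo_path_le (t : R) : a <= b -> t <= 1 -> geo_path a b t <= b.
Proof.
  intros Hab Ht; rewrite <- (exp_ln b) at 2 by exact Hb; unfold geo_path.
  assert (ln a <= ln b) by (apply ln_le; assumption).
  destruct (Rle_lt_or_eq_dec (ln a + t * (ln b - ln a)) (ln b)) as [Hlt | ->]; [nra | |].
  - left; apply exp_increasing, Hlt.
  - right; reflexivity.
Qed.

Lemma geo_path_GA (m t : R) :
  m <> 0 -> rpow b t * rpow (Rpower a (1 / m)) (m * (1 - t)) = geo_path a b t.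
Proof.
  intro Hm; rewrite !rpow_pos by (try apply exp_pos; exact Hb).
  unfold Rpower, geo_path; rewrite ln_exp, <- exp_plus; f_equal; field; exact Hm.
Qed.

Lemma G_integrand_geo_path (alpha t : R) (n : nat) :
  G_integrand a b alpha (INR n) t = rpow t alpha * geo_path a b t ^ n.
Proof.
  rewrite <- Rpower_pow by apply geo_path_pos.
  unfold G_integrand, geo_path, Rpower; rewrite Rmult_assoc, <- exp_plus, ln_exp.
  f_equal; f_equal; ring.
Qed.

Lemma is_RInt_geo_path_pow (n : nat) :
  a <> b -> (0 < n)%nat ->
  is_RInt (fun t => geo_path a b t ^ n) 0 1 (logmean (a ^ n) (b ^ n)).
Proof.
  intros Hab Hn.
  assert (HL : ln b - ln a <> 0).
  { intro E; apply Hab, ln_inv; lra. }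
  assert (HnR : INR n <> 0) by (apply not_0_INR; lia).
  unfold logmean; rewrite !ln_pow, <- Rmult_minus_distr_l by assumption.
  replace ((b ^ n - a ^ n) / (INR n * (ln b - ln a)))
    with (minus (geo_path a b 1 ^ n / (INR n * (ln b - ln a)))
                (geo_path a b 0 ^ n / (INR n * (ln b - ln a))))
    by (rewrite geo_path_0, geo_path_1; unfold minus, plus, opp; simpl; field; tauto).
  apply (is_RInt_derive (fun t => geo_path a b t ^ n / (INR n * (ln b - ln a)))).
  - intros t _; unfold geo_path; auto_derive; [exact I |].
    destruct n as [| k]; [lia |]; rewrite <- pred_Sn; simpl; field; tauto.
  - intros t _; apply continuity_pt_filterlim, continuous_geo_path_pow.
Qed.

End GeometricPath.

Definition moment_primitive (f : R -> R) (a x : R) : R :=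
  x ^ 2 / 2 * f x - RInt (fun s => s * f s) a x.

Lemma is_derive_moment_primitive (f df : R -> R) (a x : R) :
  0 < a -> (forall y, 0 < y -> derivable_pt_lim f y (df y)) -> 0 < x ->
  is_derive (moment_primitive f a) x (x ^ 2 / 2 * df x).
Proof.
  intros Ha Hdiff Hx.
  assert (cont : forall s, 0 < s -> continuity_pt (fun s => s * f s) s).
  { intros s Hs; apply continuity_pt_mult.
    - apply derivable_continuous_pt, derivable_pt_id.
    - apply derivable_continuous_pt; exists (df s); apply Hdiff, Hs. }
  assert (derP : is_derive (fun y => RInt (fun s => s * f s) a y) x (x * f x)).
  { apply (is_derive_RInt (fun s => s * f s) _ a x).
    - assert (Hx2 : 0 < x / 2) by lra.
      exists (mkposreal _ Hx2); intros y Hy.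
      change (Rabs (y - x) < x / 2) in Hy; apply Rabs_def2 in Hy.
      apply (RInt_correct (V := R_CompleteNormedModule)), ex_RInt_continuous.
      intros z [Hz _]; apply continuity_pt_filterlim, cont.
      apply Rlt_le_trans with (2 := Hz), Rmin_glb_lt; lra.
    - apply continuity_pt_filterlim, cont, Hx. }
  assert (derS : is_derive (fun y => y ^ 2 / 2) x x) by (auto_derive; [exact I | field]).
  pose proof (is_derive_mult _ _ x _ _ derS (proj2 (is_derive_Reals _ _ _) (Hdiff x Hx))
                (fun u v => Rmult_comm u v)) as derM.
  pose proof (is_derive_minus _ _ x _ _ derM derP) as derF.
  unfold moment_primitive.
  replace (x ^ 2 / 2 * df x)
    with (minus (plus (mult x (f x)) (mult (x ^ 2 / 2) (df x))) (x * f x))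
    by (unfold minus, plus, mult, opp; simpl; ring).
  exact derF.
Qed.

(* Here the left-hand side is
   F(X 1) - F(X 0) and (F o X)' = (ln b - ln a)/2 X^3 f'(X). *)
Lemma moment_deviation_le (f df w : R -> R) (a b I : R) :
  0 < a < b -> (forall y, 0 < y -> derivable_pt_lim f y (df y)) ->
  (forall t, 0 <= t <= 1 -> Rabs (df (geo_path a b t)) <= w t) ->
  (forall t, continuity_pt w t) ->
  is_RInt (fun t => geo_path a b t ^ 3 * w t) 0 1 I ->
  Rabs ((b ^ 2 * f b - a ^ 2 * f a) / 2 - RInt (fun x => x * f x) a b)
    <= (ln b - ln a) / 2 * I.
Proof.
  intros [Ha Hab] Hdiff Hw contw HI.
  set (L := ln b - ln a).
  assert (HL : 0 < L) by (unfold L; pose proof (ln_increasing a b Ha Hab); lra).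
  set (X := geo_path a b).
  set (H := fun t => moment_primitive f a (X t)).
  assert (ends : (b ^ 2 * f b - a ^ 2 * f a) / 2 - RInt (fun x => x * f x) a b = H 1 - H 0).
  { unfold H, moment_primitive, X; rewrite geo_path_0, geo_path_1, RInt_point by lra.
    unfold zero; simpl; field. }
  set (B := fun t => L / 2 * (X t ^ 3 * w t)).
  assert (intB : RInt B 0 1 = L / 2 * I)
    by exact (is_RInt_unique _ _ _ _ (is_RInt_scal _ _ _ _ _ HI)).
  rewrite ends, <- intB.
  apply (abs_increment_le_RInt H (fun t => L * X t * (X t ^ 2 / 2 * df (X t)))); [lra | | |].
  - intros t _; exact (is_derive_comp _ X t _ _
      (is_derive_moment_primitive f df a (X t) Ha Hdiff (geo_path_pos a b t))
      (is_derive_geo_path a b t)).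
  - intros t Ht; unfold B.
    assert (Hk : 0 <= L / 2 * X t ^ 3)
      by (apply Rmult_le_pos; [lra | apply pow_le, Rlt_le, geo_path_pos]).
    replace (L * X t * (X t ^ 2 / 2 * df (X t))) with (L / 2 * X t ^ 3 * df (X t)) by field.
    rewrite Rabs_mult, (Rabs_right _ (Rle_ge _ _ Hk)), <- Rmult_assoc.
    apply Rmult_le_compat_l, Hw, Ht; exact Hk.
  - intro t; apply continuity_pt_mult; [apply continuity_pt_const; intros u v; reflexivity |].
    apply continuity_pt_mult; [apply continuous_geo_path_pow | apply contw].
Qed.

(* The majorant of |f'| along the path supplied by GA-convexity:
   w(t) = t^alpha |f'(b)| + m (1 - t^alpha) |f'(a^(1/m))|, with cb = |f'(b)| and
   cA = |f'(a^(1/m))|, extended continuously to t < 0. *)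
Definition GA_weight (alpha m cb cA t : R) : R :=
  rpow (Rmax 0 t) alpha * cb + m * (1 - rpow (Rmax 0 t) alpha) * cA.

Lemma continuous_GA_weight (alpha m cb cA : R) :
  0 < alpha -> forall t, continuity_pt (GA_weight alpha m cb cA) t.
Proof.
  intros Halpha t; pose proof (continuous_rpow_pos_part alpha Halpha t) as Hr.
  assert (Hc : forall c : R, continuity_pt (fun _ => c) t)
    by (intro c; apply continuity_pt_const; intros u v; reflexivity).
  unfold GA_weight; apply continuity_pt_plus; apply continuity_pt_mult; auto.
  apply continuity_pt_mult, continuity_pt_minus; auto.
Qed.

(* GA-convexity with x = b, y = a^(1/m), lambda = t bounds h along the path. *)
Lemma GA_convex_on_geo_path (alpha m a b : R) (h : R -> R) :
  0 < a <= b -> 0 < m ->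
  GA_convex alpha m (Rmax (Rpower a (1 / m)) b) h ->
  forall t, 0 <= t <= 1 ->
  h (geo_path a b t) <= GA_weight alpha m (h b) (h (Rpower a (1 / m))) t.
Proof.
  intros [Ha Hab] Hm Hconv t Ht.
  assert (HA : 0 < Rpower a (1 / m)) by apply exp_pos.
  assert (HXb : geo_path a b t <= b) by (apply geo_path_le; lra).
  pose proof (geo_path_pos a b t).
  pose proof (Rmax_l (Rpower a (1 / m)) b); pose proof (Rmax_r (Rpower a (1 / m)) b).
  unfold GA_weight; rewrite Rmax_right by lra.
  rewrite <- (geo_path_GA a b ltac:(lra) m t) by lra.
  apply Hconv; rewrite ?geo_path_GA by lra; lra.
Qed.

Lemma is_RInt_GA_weight (alpha m cb cA a b G : R) (n : nat) :
  0 < a -> 0 < b -> a <> b -> (0 < n)%nat ->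
  is_RInt (G_integrand a b alpha (INR n)) 0 1 G ->
  is_RInt (fun t => geo_path a b t ^ n * GA_weight alpha m cb cA t) 0 1
    (m * (logmean (a ^ n) (b ^ n) - G) * cA + G * cb).
Proof.
  intros Ha Hb Hab Hn HG.
  set (Xn := fun t => geo_path a b t ^ n).
  set (r := fun t => rpow (Rmax 0 t) alpha).
  assert (IG : is_RInt (fun t => r t * Xn t) 0 1 G).
  { apply (is_RInt_ext (G_integrand a b alpha (INR n))); [| exact HG].
    intros t Ht; rewrite Rmin_left, Rmax_right in Ht by lra.
    unfold r, Xn; rewrite Rmax_right by lra; apply G_integrand_geo_path. }
  apply (is_RInt_ext (fun t => plus (scal cb (r t * Xn t))
                                 (scal (m * cA) (minus (Xn t) (r t * Xn t))))).
  - intros t _; unfold GA_weight, minus, plus, scal, opp; simpl; unfold mult; simpl.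
    fold (r t) (Xn t); ring.
  - replace (m * (logmean (a ^ n) (b ^ n) - G) * cA + G * cb) with
      (plus (scal cb G) (scal (m * cA) (minus (logmean (a ^ n) (b ^ n)) G)))
      by (unfold minus, plus, scal, opp; simpl; unfold mult; simpl; ring).
    apply (is_RInt_plus (V := R_NormedModule)); apply (is_RInt_scal (V := R_NormedModule));
      [exact IG | apply (is_RInt_minus (V := R_NormedModule)); [| exact IG]].
    apply is_RInt_geo_path_pow; assumption.
Qed.

Theorem corollary3p1
  (f df : R -> R) (a b alpha m : R)
  (Hdiff : forall x : R, 0 < x -> derivable_pt_lim f x (df x))
  (Hdiff0 : right_deriv f 0 (df 0))
  (Hab : 0 < a < b)
  (Halpha : 0 < alpha <= 1) (Hm : 0 < m <= 1)
  (Hconv : GA_convex alpha m (Rmax (Rpower a (1 / m)) b) (fun x => Rabs (df x)))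
  (prI : Riemann_integrable (fun x => x * f x) a b)
  (prG : Riemann_integrable (G_integrand a b alpha 3) 0 1) :
  Rabs ((b ^ 2 * f b - a ^ 2 * f a) / 2 - RiemannInt prI)
    <= (ln b - ln a) / 2 *
       (m * (logmean (a ^ 3) (b ^ 3) - RiemannInt prG) * Rabs (df (Rpower a (1 / m)))
        + RiemannInt prG * Rabs (df b)).
Proof.
  assert (IG : is_RInt (G_integrand a b alpha (INR 3)) 0 1 (RiemannInt prG)).
  { rewrite <- (RInt_Reals _ _ _ prG); replace (INR 3) with 3 by (simpl; ring).
    exact (RInt_correct (V := R_CompleteNormedModule) _ _ _ (ex_RInt_Reals_1 _ _ _ prG)). }
  rewrite <- (RInt_Reals _ _ _ prI).
  apply (moment_deviation_le f df
           (GA_weight alpha m (Rabs (df b)) (Rabs (df (Rpower a (1 / m))))) a b);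
    [exact Hab | exact Hdiff | | | ].
  - apply (GA_convex_on_geo_path alpha m a b (fun x => Rabs (df x))); [lra | lra | exact Hconv].
  - apply continuous_GA_weight, Halpha.
  - apply is_RInt_GA_weight; [lra | lra | lra | lia | exact IG].
Qed.
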